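(* Let $b$ be a graph over a countable set $X$ and let $x,y,z\in X$. The following statements are equivalent: (i) $R(x,z)=R(x,y)+R(y,z)$. (ii) All paths from $x$ to $z$ (in the graph $b$) pass through $y$.
   Context: A graph over a countable set $X$ is a symmetric map $b:X\times X\to[0,\infty)$ with $b(x,x)=0$ for all $x$ and $\sum_{y\in X}b(x,y)<\infty$ for every $x\in X$. A path in $b$ from $x$ to $z$ is a sequence of distinct vertices $(x_0,\dots,x_n)$ with $x_0=x$, $x_n=z$ and $b(x_{i-1},x_i)>0$ for all $i$. For $f:X\to\mathbb R$ let $Q(f):=\frac12\sum_{x,y\in X}b(x,y)(f(x)-f(y))^2\in[0,\infty]$. The resistance metric is $R(x,y):=\sup\{(f(y)-f(x))^2\mid f:X\to\mathbb R,\ Q(f)=1\}$. *)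

From HB Require Import structures.
From mathcomp Require Import all_boot all_order all_algebra.
From mathcomp Require Import all_classical all_reals all_analysis.
Set Implicit Arguments. Unset Strict Implicit. Unset Printing Implicit Defensive.
Import Order.TTheory GRing.Theory Num.Theory.
Local Open Scope classical_set_scope.
Local Open Scope ring_scope.

Definition is_graph (R : realType) (X : countType) (b : X -> X -> R) : Prop :=
  [/\ forall x y, 0 <= b x y,
      forall x y, b x y = b y x,
      forall x, b x x = 0
    & forall x, (\esum_(y in [set: X]) (b x y)%:E < +oo)%E].

Definition energy (R : realType) (X : countType) (b : X -> X -> R)
  (f : X -> R) : \bar R :=
  ((2%:R^-1)%:E * \esum_(p in [set: X * X])
      (b p.1 p.2 * (f p.1 - f p.2) ^+ 2)%:E)%E.

Definition resist (R : realType) (X : countType) (b : X -> X -> R)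
  (x y : X) : \bar R :=
  ereal_sup [set ((f y - f x) ^+ 2)%:E | f in [set f : X -> R | energy b f = 1%E]].

Definition is_bpath (R : realType) (X : countType) (b : X -> X -> R)
  (x z : X) (s : seq X) : bool :=
  [&& uniq (x :: s), path (fun u v => 0 < b u v) x s & last x s == z].

(* If every path from [x] to [z] meets [y], then [z] lies outside the
   component of [x] in the graph minus [y]; gluing near-optimal potentials for
   [(x, y)] on that component and for [(y, z)] off it shows
   R(x,z) >= R(x,y) + R(y,z), and the reverse inequality follows by truncating
   potentials at the level of [y].
   Conversely, if the equality holds, all three resistances are finite as soon
   as some path joins [x] to [z]. Truncating a near-optimal potential f for
   [(x, z)] at height f(y) leaves a near-optimal potential for [(x, y)], and
   such potentials are almost harmonic off [x] and [y]. Their closeness to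
   f(y), trivial at [z], therefore propagates backwards along a path from [x]
   to [z] avoiding [y] and finally holds at [x], contradicting R(x,y) > 0. *)

From HB Require Import structures.
From mathcomp Require Import all_boot all_order all_algebra.
From mathcomp Require Import all_classical all_reals all_analysis.
From mathcomp Require Import ring lra.
Import Order.TTheory GRing.Theory Num.Theory.
Local Open Scope classical_set_scope.
Local Open Scope ring_scope.
Set Implicit Arguments. Unset Strict Implicit.

Lemma esum_range (R : realType) (T T' : choiceType) (e : T' -> T)
    (a : T -> \bar R) : injective e ->
  (\esum_(j in range e) a j = \esum_(i in [set: T']) a (e i))%E.
Proof.
move=> inj_e; apply: reindex_esum; split.
- by move=> i _; exists i.
- by move=> i j _ _ /inj_e.
- by move=> _ [i _ <-]; exists i.
Qed.

Section esum_complements.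
Variables (R : realType) (T : choiceType).
Implicit Types a : T -> \bar R.

Lemma ge0_esumZl (k : R) a : 0 <= k -> (forall i, 0 <= a i)%E ->
  (\esum_(i in [set: T]) (k%:E * a i) = k%:E * \esum_(i in [set: T]) a i)%E.
Proof.
move=> k0 a0; rewrite /esum -ereal_supZl//; last first.
  by apply/set0P; exists 0%E; exists set0 => //; rewrite fsbig_set0.
congr ereal_sup; apply/seteqP; split=> z.
  move=> [A hA <-]; exists (\sum_(i \in A) a i)%E; first by exists A.
  by rewrite ge0_mule_fsumr.
by move=> [_ [A hA <-] <-]; exists A => //; rewrite ge0_mule_fsumr.
Qed.

Lemma ge0_term_le_esum a t : (forall i, 0 <= a i)%E ->
  (a t <= \esum_(i in [set: T]) a i)%E.
Proof.
move=> a0; apply: esum_ge; exists [set t]; last by rewrite fsbig_set1.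
by split => //; exact: finite_set1.
Qed.

Lemma esum_pair_fst w a :
  (\esum_(p in [set: T * T]) (if p.1 == w then a p.2 else 0) =
   \esum_(v in [set: T]) a v)%E.
Proof.
have inj_w : injective (pair w : T -> T * T) by move=> u v [].
rewrite -(esum_range (fun p : T * T => a p.2) inj_w) [RHS]esum_mkcond.
apply: eq_esum => -[u v] _ /=; case: eqVneq => [->|uw]; first by rewrite mem_range.
rewrite ifF //; apply/negbTE/negP => /set_mem [v' _ [/esym/eqP]].
by rewrite (negbTE uw).
Qed.

Lemma esum_pair_snd w a :
  (\esum_(p in [set: T * T]) (if p.2 == w then a p.1 else 0) =
   \esum_(v in [set: T]) a v)%E.
Proof.
have inj_w : injective (fun v : T => (v, w)) by move=> u v [].
rewrite -(esum_range (fun p : T * T => a p.1) inj_w) [RHS]esum_mkcond.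
apply: eq_esum => -[u v] _ /=; case: eqVneq => [->|vw]; first by rewrite mem_range.
rewrite ifF //; apply/negbTE/negP => /set_mem [u' _ [_ /esym/eqP]].
by rewrite (negbTE vw).
Qed.

Lemma esum_finD (a c : T -> R) : (forall i, 0 <= a i) -> (forall i, 0 <= c i) ->
  (\esum_(i in [set: T]) (a i + c i)%:E =
   \esum_(i in [set: T]) (a i)%:E + \esum_(i in [set: T]) (c i)%:E)%E.
Proof.
move=> a0 c0; under eq_esum do rewrite EFinD.
by apply: esumD => i _; rewrite lee_fin.
Qed.

Lemma esum_finZl (k : R) (a : T -> R) : 0 <= k -> (forall i, 0 <= a i) ->
  (\esum_(i in [set: T]) (k * a i)%:E = k%:E * \esum_(i in [set: T]) (a i)%:E)%E.
Proof.
move=> k0 a0; under eq_esum do rewrite EFinM.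
by apply: ge0_esumZl => // i; rewrite lee_fin.
Qed.

Definition star w (F : T -> R) (p : T * T) : R :=
  (if p.1 == w then F p.2 else 0) + (if p.2 == w then F p.1 else 0).

Lemma star_ge0 w F p : (forall v, 0 <= F v) -> 0 <= star w F p.
Proof. by move=> F0; rewrite addr_ge0 //; case: ifP. Qed.

Lemma esum_star w F : (forall v, 0 <= F v) ->
  (\esum_(p in [set: T * T]) (star w F p)%:E =
   \esum_(v in [set: T]) (F v)%:E + \esum_(v in [set: T]) (F v)%:E)%E.
Proof.
move=> F0; rewrite -{1}(esum_pair_fst w) -(esum_pair_snd w) -esumD => [|p _|p _].
- by apply: eq_esum => p _; rewrite /star EFinD; congr (_ + _)%E; case: ifP.
- by case: ifP; rewrite ?lee_fin.
- by case: ifP; rewrite ?lee_fin.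
Qed.

End esum_complements.

Lemma sqrD_slack_le (R : realFieldType) (p q A B e1 e2 : R) :
  0 <= p -> 0 <= q -> 0 <= A -> 0 <= B -> 0 <= e1 -> 0 <= e2 -> e1 + e2 <= 1 ->
  p ^+ 2 <= A * e1 -> q ^+ 2 <= B * e2 ->
  (p + q) ^+ 2 + (A * e1 - p ^+ 2) <= A + B.
Proof.
move=> p0 q0 A0 B0 e10 e20 e12 pA qB.
have pq : 2 * p * q <= A * e2 + B * e1.
  rewrite -(@ler_pXn2r _ 2) ?nnegrE ?addr_ge0 ?mulr_ge0 //.
  have : p ^+ 2 * q ^+ 2 <= (A * e1) * (B * e2) by rewrite ler_pM ?sqr_ge0.
  have := sqr_ge0 (A * e2 - B * e1); nra.
nra.
Qed.

Lemma path_all_target (T : Type) (e : rel T) (P : pred T) x s :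
  (forall u v, e u v -> P v) -> path e x s -> all P s.
Proof.
by move=> eP; elim: s x => //= v s IH x /andP[/eP -> /IH].
Qed.

Section graph.
Variables (R : realType) (X : countType) (b : X -> X -> R).
Hypothesis hb : is_graph b.
Implicit Types (f g h : X -> R) (u v w : X).

Lemma graph_ge0 u v : 0 <= b u v. Proof. by case: hb. Qed.
Lemma graph_sym u v : b u v = b v u. Proof. by case: hb. Qed.
Lemma graph_diag u : b u u = 0. Proof. by case: hb. Qed.

Definition degree u : R := fine (\esum_(v in [set: X]) (b u v)%:E)%E.

Lemma degreeE u : (\esum_(v in [set: X]) (b u v)%:E)%E = (degree u)%:E.
Proof.
have deg_ge0 : (0 <= \esum_(v in [set: X]) (b u v)%:E)%E.
  by apply: esum_ge0 => v _; rewrite lee_fin graph_ge0.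
by rewrite fineK // ge0_fin_numE //; case: hb => _ _ _; apply.
Qed.

Lemma degree_ge0 u : 0 <= degree u.
Proof.
rewrite -lee_fin -degreeE; apply: esum_ge0 => v _.
by rewrite lee_fin graph_ge0.
Qed.

Definition edge_energy f (p : X * X) : R := b p.1 p.2 * (f p.1 - f p.2) ^+ 2.

(* [energy2 f] is [2 Q(f)], so potentials are normalized by [energy2 f = 2]. *)
Definition energy2 f : \bar R :=
  (\esum_(p in [set: X * X]) (edge_energy f p)%:E)%E.

Lemma edge_energy_ge0 f p : 0 <= edge_energy f p.
Proof. by rewrite mulr_ge0 ?graph_ge0 ?sqr_ge0. Qed.

Lemma energy2_ge0 f : (0 <= energy2 f)%E.
Proof. by apply: esum_ge0 => p _; rewrite lee_fin edge_energy_ge0. Qed.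

Lemma edge_energy_le_energy2 f p : ((edge_energy f p)%:E <= energy2 f)%E.
Proof. by apply: ge0_term_le_esum => q; rewrite lee_fin edge_energy_ge0. Qed.

Lemma energy_eq1 f : energy b f = 1%E <-> energy2 f = 2%:E.
Proof.
rewrite /energy -/(energy2 f); split => [|->]; last by rewrite -EFinM mulVf.
have := energy2_ge0 f.
case: (energy2 f) => [r _ [/(congr1 (fun t => 2 * t))]| |] //=.
  by rewrite mulrA mulfV // mul1r mulr1 => ->.
by rewrite mulry gtr0_sg ?invr_gt0 // mul1e.
Qed.

Lemma energy2_real f e : (energy2 f <= e%:E)%E ->
  exists s, [/\ energy2 f = s%:E, 0 <= s & s <= e].
Proof.
move=> fe; have f0 := energy2_ge0 f.
have fin : energy2 f \is a fin_num by rewrite ge0_fin_numE // (le_lt_trans fe) ?ltry.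
by exists (fine (energy2 f)); rewrite -!lee_fin fineK.
Qed.

Lemma eq_energy2 f g : (forall p, edge_energy f p = edge_energy g p) ->
  energy2 f = energy2 g.
Proof. by move=> fg; apply: eq_esum => p _; rewrite fg. Qed.

Lemma energy2_scale f k :
  energy2 (fun u => k * f u) = ((k ^+ 2)%:E * energy2 f)%E.
Proof.
rewrite /energy2 -esum_finZl ?sqr_ge0 //; last exact: edge_energy_ge0.
by apply: eq_esum => p _; rewrite /edge_energy; congr EFin; ring.
Qed.

Lemma energy2_opp f : energy2 (fun u => - f u) = energy2 f.
Proof. by apply: eq_energy2 => p; rewrite /edge_energy; congr (_ * _); ring. Qed.

Lemma energy2_normalize f s : energy2 f = s%:E -> 0 < s ->
  energy2 (fun u => Num.sqrt (2 / s) * f u) = 2%:E.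
Proof.
move=> fs s0; rewrite energy2_scale fs sqr_sqrtr ?divr_ge0 ?(ltW s0) //.
by rewrite -EFinM mulfVK ?gt_eqF.
Qed.

Lemma le_energy2_comb f1 f2 g (k1 k2 : R) : 0 <= k1 -> 0 <= k2 ->
  (forall p, edge_energy g p <= k1 * edge_energy f1 p + k2 * edge_energy f2 p) ->
  (energy2 g <= k1%:E * energy2 f1 + k2%:E * energy2 f2)%E.
Proof.
move=> k10 k20 gf; have e0 f (k : R) p : 0 <= k -> 0 <= k * edge_energy f p.
  by move=> k0; rewrite mulr_ge0 ?edge_energy_ge0.
rewrite /energy2 -!esum_finZl ?k10 ?k20 //; try exact: edge_energy_ge0.
rewrite -esum_finD => [|p|p]; [|exact: e0..].
by apply: le_esum => p _; rewrite lee_fin.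
Qed.

Lemma energy2_trunc f c :
  (energy2 (fun u => Num.min (f u) c) + energy2 (fun u => Num.max (f u) c)
     <= energy2 f)%E.
Proof.
rewrite /energy2 -esumD => [|p _|p _]; last 2 first.
- by rewrite lee_fin edge_energy_ge0.
- by rewrite lee_fin edge_energy_ge0.
apply: le_esum => -[u v] _; rewrite -EFinD lee_fin /edge_energy -mulrDr /=.
rewrite ler_wpM2l ?graph_ge0 // !minEle !maxEle.
by case: (lerP (f u) c); case: (lerP (f v) c); nra.
Qed.

Definition indicator u v : R := (v == u)%:R.

Lemma energy2_indicator u : (energy2 (indicator u) <= (2 * degree u)%:E)%E.
Proof.
have bu0 v : 0 <= b u v by exact: graph_ge0.
apply: (@le_trans _ _ (\esum_(p in [set: X * X]) (star u (b u) p)%:E)%E).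
  apply: le_esum => -[v w] _; rewrite lee_fin /edge_energy /indicator /star /=.
  case: (eqVneq v u) => [->|vu]; case: (eqVneq w u) => [->|wu] /=.
  - by rewrite subrr expr0n mulr0 addr_ge0.
  - by rewrite subr0 expr1n mulr1 addr0.
  - by rewrite sub0r sqrrN expr1n mulr1 add0r graph_sym.
  - by rewrite subrr expr0n mulr0 addr0.
by rewrite esum_star // degreeE -EFinD lee_fin; lra.
Qed.

Lemma resist_ge_sq f x y : energy2 f = 2%:E ->
  (((f y - f x) ^+ 2)%:E <= resist b x y)%E.
Proof.
by move=> f2; apply: ereal_sup_ubound; exists f => //; exact/energy_eq1.
Qed.

Lemma resist_le x y r : (forall f, energy2 f = 2%:E -> (f y - f x) ^+ 2 <= r) ->
  (resist b x y <= r%:E)%E.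
Proof.
move=> le_r; apply: ge_ereal_sup => _ [f /energy_eq1 f2 <-].
by rewrite lee_fin le_r.
Qed.

Hypothesis hnz : exists u v, b u v != 0.

Lemma exists_energy2_eq2 : exists h, energy2 h = 2%:E.
Proof.
case: hnz => u [v buv0]; have buv : 0 < b u v by rewrite lt_def buv0 graph_ge0.
have vu : v != u by apply: contraTneq buv => ->; rewrite graph_diag ltxx.
have [s [us _ _]] := energy2_real (energy2_indicator u).
have le_s : b u v <= s.
  rewrite -lee_fin -us; apply: le_trans (edge_energy_le_energy2 _ (u, v)).
  rewrite lee_fin /edge_energy /indicator /= eqxx (negbTE vu).
  by rewrite subr0 expr1n mulr1.
exists (fun w => Num.sqrt (2 / s) * indicator u w).
exact: energy2_normalize us (lt_le_trans buv le_s).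
Qed.

Lemma resist_ge0 x y : (0 <= resist b x y)%E.
Proof.
have [h h2] := exists_energy2_eq2.
by apply: le_trans (resist_ge_sq x y h2); rewrite lee_fin sqr_ge0.
Qed.

Lemma resist_real_ge0 x y A : resist b x y = A%:E -> 0 <= A.
Proof. by move=> xyA; rewrite -lee_fin -xyA resist_ge0. Qed.

Lemma energy2_null_add f g : energy2 g = 0%E ->
  energy2 (fun u => f u + g u) = energy2 f.
Proof.
move=> g0; apply: eq_energy2 => p.
have : edge_energy g p = 0.
  apply/eqP; rewrite eq_le edge_energy_ge0 andbT -lee_fin.
  by rewrite (le_trans (edge_energy_le_energy2 g p)) ?g0.
rewrite /edge_energy => /eqP; rewrite mulf_eq0 sqrf_eq0 subr_eq0.
by case/orP => [/eqP->|/eqP gp]; rewrite ?mul0r // gp; congr (_ * _); ring.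
Qed.

(* Adding multiples of such a [g] to a normalized function would make the
   resistance unbounded. *)
Lemma null_energy2_eq x y A g :
  resist b x y = A%:E -> energy2 g = 0%E -> g y = g x.
Proof.
move=> xyA g0; apply/eqP; rewrite -subr_eq0; apply/negP => /negP d0.
have [h h2] := exists_energy2_eq2.
pose t := (A + 1 - (h y - h x)) / (g y - g x).
have ht2 : energy2 (fun u => h u + t * g u) = 2%:E.
  by rewrite energy2_null_add // energy2_scale g0 mule0.
have := resist_ge_sq x y ht2; rewrite xyA lee_fin.
have -> : h y + t * g y - (h x + t * g x) = A + 1 by rewrite /t; field.
by have := resist_real_ge0 xyA; nra.
Qed.

Lemma diff_sq_le_resist_energy x y A g s : resist b x y = A%:E ->
  energy2 g = s%:E -> 2 * (g y - g x) ^+ 2 <= A * s.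
Proof.
move=> xyA gs; have [s_gt0|s_le0] := ltrP 0 s; last first.
  have s_eq0 : s = 0 by apply/le_anti; rewrite s_le0 -lee_fin -gs energy2_ge0.
  by rewrite (null_energy2_eq xyA (g := g)) ?gs ?s_eq0 // subrr expr0n !mulr0.
have := resist_ge_sq x y (energy2_normalize gs s_gt0).
rewrite xyA lee_fin -mulrBr exprMn sqr_sqrtr; last by rewrite divr_ge0 // ltW.
by rewrite mulrAC ler_pdivrMr.
Qed.

Lemma resist_xx x : resist b x x = 0%E.
Proof.
apply/le_anti; rewrite resist_ge0 andbT.
by apply: resist_le => f _; rewrite subrr expr0n.
Qed.

Lemma resist_gt0 x y A : x != y -> resist b x y = A%:E -> 0 < A.
Proof.
move=> xy xyA; have [s [xs s0 _]] := energy2_real (energy2_indicator x).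
have := diff_sq_le_resist_energy xyA xs.
rewrite /indicator eqxx eq_sym (negbTE xy) sub0r sqrrN expr1n mulr1.
by have := resist_real_ge0 xyA; nra.
Qed.

Lemma diff_sq_le_resist f x y A : energy2 f = 2%:E -> resist b x y = A%:E ->
  (f y - f x) ^+ 2 <= A.
Proof.
by move=> f2 xyA; have := diff_sq_le_resist_energy xyA f2; lra.
Qed.

(* The slack [A s - 2 (f y - f x)^2] measures how far the truncation of [f]
   below [f y] is from optimal for [(x, y)]. *)
Lemma trunc_slack f x y z A B : energy2 f = 2%:E ->
  resist b x y = A%:E -> resist b y z = B%:E -> f x <= f y -> f y <= f z ->
  exists s, [/\ energy2 (fun u => Num.min (f u) (f y)) = s%:E,
    2 * (f y - f x) ^+ 2 <= A * s &
    (f z - f x) ^+ 2 + (A * s - 2 * (f y - f x) ^+ 2) / 2 <= A + B].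
Proof.
move=> f2 xyA yzB fxy fyz.
have A0 := resist_real_ge0 xyA; have B0 := resist_real_ge0 yzB.
have tr := energy2_trunc f (f y); rewrite f2 in tr.
have [s1 [e1 s10 _]] := energy2_real (le_trans (leeDl _ (energy2_ge0 _)) tr).
have [s2 [e2 s20 _]] := energy2_real (le_trans (leeDr _ (energy2_ge0 _)) tr).
rewrite e1 e2 -EFinD lee_fin in tr.
have := diff_sq_le_resist_energy xyA e1.
have := diff_sq_le_resist_energy yzB e2.
rewrite /= minxx maxxx (min_l fxy) (max_l fyz) => hq hp.
exists s1; split => //.
have -> : (f z - f x) ^+ 2 + (A * s1 - 2 * (f y - f x) ^+ 2) / 2 =
    (f y - f x + (f z - f y)) ^+ 2 + (A * (s1 / 2) - (f y - f x) ^+ 2) by field.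
apply: (sqrD_slack_le (e2 := s2 / 2)); rewrite ?subr_ge0 ?mulrA //; lra.
Qed.

Lemma diff_sq_le_resist_add f x y z A B : energy2 f = 2%:E ->
  resist b x y = A%:E -> resist b y z = B%:E -> (f z - f x) ^+ 2 <= A + B.
Proof.
move=> + xyA yzB; have A0 := resist_real_ge0 xyA; have B0 := resist_real_ge0 yzB.
wlog fxz : f / f x <= f z => [le_AB f2|f2].
  have [fxz|fzx] := lerP (f x) (f z); first exact: le_AB fxz f2.
  have -> : (f z - f x) ^+ 2 = (- f z - - f x) ^+ 2 by ring.
  by apply: (le_AB (fun u => - f u)); rewrite ?energy2_opp //; lra.
have [fyx|fxy] := ltrP (f y) (f x).
  by have := diff_sq_le_resist f2 yzB; nra.
have [fzy|fyz] := ltrP (f z) (f y).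
  by have := diff_sq_le_resist f2 xyA; nra.
have [s [_ hp hs]] := trunc_slack f2 xyA yzB fxy fyz.
lra.
Qed.

Lemma resist_triangle x y z : (resist b x z <= resist b x y + resist b y z)%E.
Proof.
have ninfty u v : resist b u v != -oo%E.
  by rewrite gt_eqF // (lt_le_trans _ (resist_ge0 u v)) ?ltNy0.
case xyA: (resist b x y) (ninfty x y) => [A| |] // _; last by rewrite addye ?leey.
case yzB: (resist b y z) (ninfty y z) => [B| |] // _; last by rewrite addey ?leey.
rewrite -EFinD; apply: resist_le => f f2.
exact: diff_sq_le_resist_add f2 xyA yzB.
Qed.

Lemma resist_bounded_real x y c : (resist b x y <= c%:E)%E ->
  exists A, resist b x y = A%:E.
Proof.
move=> le_c; exists (fine (resist b x y)).
by rewrite fineK // ge0_fin_numE ?resist_ge0 // (le_lt_trans le_c) ?ltry.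
Qed.

Section separation.
Variables x y z : X.
Hypothesis xy : x != y.
Hypothesis sep : forall s, is_bpath b x z s -> y \in x :: s.

Definition avoid_edge : rel X := fun u v => (0 < b u v) && (v != y).

Definition reach u : Prop := exists s, path avoid_edge x s && (last x s == u).

Lemma reach_x : reach x.
Proof. by exists [::] => /=. Qed.

Lemma reach_step u v : reach u -> 0 < b u v -> v != y -> reach v.
Proof.
move=> [s /andP[xs /eqP su]] buv vy; exists (rcons s v).
by rewrite rcons_path xs su /avoid_edge buv vy last_rcons eqxx.
Qed.

Lemma reach_edge_out u v : reach u -> ~ reach v -> 0 < b u v -> v = y.
Proof. by move=> ru rv buv; apply/eqP/negP => /negP /(reach_step ru buv). Qed.

Lemma not_reach_z : ~ reach z.
Proof.
move=> [s /andP[xs /eqP sz]]; case: (shortenP xs) sz => s' xs' us' _ s'z.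
have /allP s'y : all (predC1 y) s' by apply: path_all_target xs' => u v /andP[].
have : is_bpath b x z s'.
  by rewrite /is_bpath us' s'z eqxx andbT (sub_path _ xs') // => u v /andP[].
by move/sep; rewrite inE eq_sym (negbTE xy) /= => /s'y /=; rewrite eqxx.
Qed.

Definition glue f1 f2 u : R :=
  if `[< reach u >] then (f1 y - f1 x) * (f1 u - f1 y)
  else (f2 z - f2 y) * (f2 u - f2 y).

(* An edge leaving the component of [x] in the graph minus [y] ends at [y],
   where both pieces of the glued function vanish. *)
Lemma glue_edge_energy f1 f2 p :
  edge_energy (glue f1 f2) p <=
  (f1 y - f1 x) ^+ 2 * edge_energy f1 p + (f2 z - f2 y) ^+ 2 * edge_energy f2 p.
Proof.
case: p => u v; rewrite /edge_energy /glue /=.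
set c1 := f1 y - f1 x; set c2 := f2 z - f2 y.
have [b0|bn0] := eqVneq (b u v) 0; first by rewrite b0 !mul0r !mulr0 addr0.
have buv : 0 < b u v by rewrite lt_def bn0 graph_ge0.
have bvu : 0 < b v u by rewrite graph_sym.
have k1 : b u v * (c1 * (f1 u - f1 y) - c1 * (f1 v - f1 y)) ^+ 2 =
    c1 ^+ 2 * (b u v * (f1 u - f1 v) ^+ 2) by ring.
have k2 : b u v * (c2 * (f2 u - f2 y) - c2 * (f2 v - f2 y)) ^+ 2 =
    c2 ^+ 2 * (b u v * (f2 u - f2 v) ^+ 2) by ring.
case: (asboolP (reach u)) => ru; case: (asboolP (reach v)) => rv.
- by rewrite k1 lerDl mulr_ge0 ?sqr_ge0 // mulr_ge0 ?graph_ge0 ?sqr_ge0.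
- move: k1; rewrite (reach_edge_out ru rv buv) !subrr !mulr0 => ->.
  by rewrite lerDl mulr_ge0 ?sqr_ge0 // mulr_ge0 ?graph_ge0 ?sqr_ge0.
- move: k1; rewrite (reach_edge_out rv ru bvu) !subrr !mulr0 => ->.
  by rewrite lerDl mulr_ge0 ?sqr_ge0 // mulr_ge0 ?graph_ge0 ?sqr_ge0.
- by rewrite k2 lerDr mulr_ge0 ?sqr_ge0 // mulr_ge0 ?graph_ge0 ?sqr_ge0.
Qed.

Lemma glue_resist_ge f1 f2 : energy2 f1 = 2%:E -> energy2 f2 = 2%:E ->
  (((f1 y - f1 x) ^+ 2 + (f2 z - f2 y) ^+ 2)%:E <= resist b x z)%E.
Proof.
move=> f12 f22; set D := _ + _; have D0 : 0 <= D by rewrite addr_ge0 ?sqr_ge0.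
have gle : (energy2 (glue f1 f2) <= (2 * D)%:E)%E.
  have comb := le_energy2_comb (sqr_ge0 _) (sqr_ge0 _) (glue_edge_energy f1 f2).
  apply: le_trans comb _.
  by rewrite f12 f22 -!EFinM -EFinD lee_fin /D; lra.
have gxz : glue f1 f2 z - glue f1 f2 x = D.
  rewrite /glue; case: asboolP => [/not_reach_z //|_].
  by case: asboolP => [_|/(_ reach_x) //]; rewrite /D; ring.
case xzr: (resist b x z) => [r| |]; last by have := resist_ge0 x z; rewrite xzr.
  have [s [gs _ sD]] := energy2_real gle; have r0 := resist_real_ge0 xzr.
  have := diff_sq_le_resist_energy xzr gs; rewrite gxz lee_fin => le_rs.
  rewrite leNgt; apply/negP => rD.
  have : r * D < D * D by rewrite ltr_pM2r // (le_lt_trans r0 rD).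
  by have := ler_wpM2l r0 sD; lra.
by rewrite leey.
Qed.

Lemma resist_le_sub_sq f r : resist b x z = r%:E -> energy2 f = 2%:E ->
  (resist b x y <= (r - (f z - f y) ^+ 2)%:E)%E.
Proof.
move=> xzr f2; apply: resist_le => g g2.
by have := glue_resist_ge g2 f2; rewrite xzr lee_fin; lra.
Qed.

Lemma resist_add_ge : (resist b x y + resist b y z <= resist b x z)%E.
Proof.
case xzr: (resist b x z) => [r| |]; last by have := resist_ge0 x z; rewrite xzr.
  have [h h2] := exists_energy2_eq2.
  have [A xyA] := resist_bounded_real (resist_le_sub_sq xzr h2).
  have yzr : (resist b y z <= (r - A)%:E)%E.
    apply: resist_le => f f2; have := resist_le_sub_sq xzr f2.
    by rewrite xyA lee_fin; lra.
  have [B yzB] := resist_bounded_real yzr.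
  by move: yzr; rewrite xyA yzB -EFinD !lee_fin; lra.
by rewrite leey.
Qed.

Lemma resist_separated : resist b x z = (resist b x y + resist b y z)%E.
Proof. by apply/le_anti; rewrite resist_add_ge resist_triangle. Qed.

End separation.

Definition lower_at g w (eps : R) u : R := if u == w then g w - eps else g u.

Lemma edge_energy_lower_at g w c eps p : (forall v, g v <= c) -> 0 <= eps ->
  edge_energy (lower_at g w eps) p +
    2 * eps * star w (fun v => b w v * Num.max 0 (g w - g v)) p <=
  edge_energy g p + star w (fun v => (eps ^+ 2 + 2 * eps * (c - g w)) * b w v) p.
Proof.
move=> gc eps0; case: p => u v; rewrite /edge_energy /lower_at /star /=.
have key t : (g w - eps - g t) ^+ 2 + 2 * eps * Num.max 0 (g w - g t) <=
    (g w - g t) ^+ 2 + (eps ^+ 2 + 2 * eps * (c - g w)).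
  by have := gc t; have := gc w; rewrite maxEle; case: ifP => _; nra.
case: (eqVneq u w) => [->|uw]; case: (eqVneq v w) => [->|vw] /=.
- by rewrite graph_diag; lra.
- by have := ler_wpM2l (graph_ge0 w v) (key v); lra.
- by rewrite graph_sym; have := ler_wpM2l (graph_ge0 w u) (key u); lra.
- lra.
Qed.

Lemma energy2_lower_at g w u c eps : (forall v, g v <= c) -> 0 <= eps ->
  (energy2 (lower_at g w eps) + (4 * eps * (b w u * (g w - g u)))%:E <=
   energy2 g + (2 * (eps ^+ 2 + 2 * eps * (c - g w)) * degree w)%:E)%E.
Proof.
move=> gc eps0; set K := eps ^+ 2 + 2 * eps * (c - g w).
have K0 : 0 <= K by have := gc w; rewrite /K; nra.
set F1 := fun v => b w v * Num.max 0 (g w - g v).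
have F10 v : 0 <= F1 v by rewrite mulr_ge0 ?graph_ge0 ?le_max ?lexx.
have F20 v : 0 <= K * b w v by rewrite mulr_ge0 ?graph_ge0.
have eps2 : 0 <= 2 * eps by rewrite mulr_ge0.
have star1 p : 0 <= 2 * eps * star w F1 p by rewrite mulr_ge0 ?star_ge0.
have star2 p : 0 <= star w (fun v => K * b w v) p by rewrite star_ge0.
have : (\esum_(p in [set: X * X])
          (edge_energy (lower_at g w eps) p + 2 * eps * star w F1 p)%:E <=
        \esum_(p in [set: X * X])
          (edge_energy g p + star w (fun v => K * b w v) p)%:E)%E.
  by apply: le_esum => p _; rewrite lee_fin edge_energy_lower_at.
rewrite (esum_finD (a := edge_energy _)) ?(esum_finD (a := edge_energy g)) //;
  try exact: edge_energy_ge0.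
rewrite esum_finZl ?esum_star // => [|p]; last by rewrite star_ge0.
rewrite esum_finZl ?degreeE // => [sum_le|]; last exact: graph_ge0.
have gain : ((b w u * (g w - g u))%:E <= \esum_(v in [set: X]) (F1 v)%:E)%E.
  apply: le_trans (ge0_term_le_esum u _) => [|v]; last by rewrite lee_fin.
  by rewrite lee_fin ler_wpM2l ?graph_ge0 // le_max lexx orbT.
apply: le_trans (le_trans _ sum_le) _.
  apply: leeD => //; set t := b w u * (g w - g u).
  have -> : 4 * eps * t = 2 * eps * (t + t) by ring.
  by rewrite EFinM EFinD; apply: lee_wpmul2l; [rewrite lee_fin|exact: leeD].
by rewrite -!EFinM -EFinD (_ : K * degree w + _ = 2 * K * degree w) //; ring.
Qed.

Section propagation.
Variables (x y z : X) (A B : R).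
Hypotheses (xyA : resist b x y = A%:E) (yzB : resist b y z = B%:E).
Hypotheses (A_gt0 : 0 < A) (B_gt0 : 0 < B).

(* Near-optimal potentials for [(x, y)] are almost harmonic off [x] and [y]:
   lowering one at [v] cannot decrease its energy much. *)
Lemma lower_at_estimate g v u s d eps : (forall w, g w <= g y) ->
  v != x -> v != y -> energy2 g = s%:E -> A * s - 2 * (g y - g x) ^+ 2 <= d ->
  0 <= eps ->
  4 * A * eps * (b v u * (g v - g u)) <=
  d + 2 * A * (eps ^+ 2 + 2 * eps * (g y - g v)) * degree v.
Proof.
move=> gy vx vy gs gap eps0; have := energy2_lower_at v u gy eps0.
rewrite gs -EFinD -leeBrDr // -EFinB => /energy2_real [s' [ls' _ s'_le]].
have := diff_sq_le_resist_energy xyA ls'.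
rewrite /lower_at eq_sym (negbTE vy) eq_sym (negbTE vx).
by have := ler_wpM2l (ltW A_gt0) s'_le; lra.
Qed.

Definition near_opt eta f :=
  [/\ energy2 f = 2%:E, f x <= f y, f y <= f z & A + B - eta < (f z - f x) ^+ 2].

Lemma near_opt_mono eta eta' f : eta <= eta' -> near_opt eta f -> near_opt eta' f.
Proof. by move=> le_eta [f2 fxy fyz gt]; split => //; lra. Qed.

Lemma near_opt_gap eta f : near_opt eta f ->
  exists s, energy2 (fun u => Num.min (f u) (f y)) = s%:E /\
            A * s - 2 * (f y - f x) ^+ 2 <= 2 * eta.
Proof.
case=> f2 fxy fyz gt; have [s [gs _ le_AB]] := trunc_slack f2 xyA yzB fxy fyz.
by exists s; split => //; lra.
Qed.

Definition flat_at v := forall tau, 0 < tau -> exists2 eta, 0 < eta &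
  forall f, near_opt eta f -> f y - Num.min (f v) (f y) <= tau.

Lemma flat_at_z : flat_at z.
Proof.
move=> tau tau_gt0; exists 1 => // f [_ _ fyz _].
by rewrite (min_r fyz) subrr ltW.
Qed.

Lemma flat_at_step v u : v != x -> v != y -> 0 < b v u -> flat_at v -> flat_at u.
Proof.
move=> vx vy buv flat_v tau tau_gt0; have D0 := degree_ge0 v.
have [eps [eps_gt0 eps_D]] : exists eps, 0 < eps /\
    2 * eps * (degree v + 1) = b v u * tau.
  exists (b v u * tau / (2 * (degree v + 1))); split.
    by rewrite divr_gt0 ?mulr_gt0 ?ltr_wpDl.
  by field; rewrite gt_eqF ?ltr_wpDl.
have [tau' [tau'_gt0 tau'_D]] : exists tau', 0 < tau' /\
    4 * tau' * (b v u + degree v) = b v u * tau.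
  exists (b v u * tau / (4 * (b v u + degree v))); split.
    by rewrite divr_gt0 ?mulr_gt0 ?ltr_pwDl.
  by field; rewrite gt_eqF ?ltr_pwDl.
have [eta' eta'_gt0 flat'] := flat_v tau' tau'_gt0.
exists (Num.min eta' (A * eps * b v u * tau / 2)) => [|f opt].
  by rewrite lt_min eta'_gt0 divr_gt0 ?mulr_gt0.
have dv : f y - Num.min (f v) (f y) <= tau'.
  by apply: flat' (near_opt_mono _ opt); rewrite ge_min lexx.
have eta_le :
    Num.min eta' (A * eps * b v u * tau / 2) <= A * eps * b v u * tau / 2.
  by rewrite ge_min lexx orbT.
have [s [gs gap]] := near_opt_gap opt; case: opt => _ fxy _ _.
have gy w : Num.min (f w) (f y) <= Num.min (f y) (f y).
  by rewrite minxx ge_min lexx orbT.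
have := lower_at_estimate u gy vx vy gs _ (ltW eps_gt0).
rewrite minxx (min_l fxy) => /(_ _ gap) est.
have h1 : A * eps * (4 * (f y - Num.min (f v) (f y)) * (b v u + degree v)) <=
          A * eps * (b v u * tau).
  apply: ler_wpM2l; first by rewrite mulr_ge0 // ltW.
  by rewrite -tau'_D ler_wpM2r ?addr_ge0 ?graph_ge0 // ler_wpM2l.
have h2 : A * eps * (2 * eps * degree v) <= A * eps * (b v u * tau).
  apply: ler_wpM2l; first by rewrite mulr_ge0 // ltW.
  by rewrite -eps_D ler_wpM2l ?lerDl // mulr_ge0 // ltW.
have P_gt0 : 0 < A * eps * b v u by rewrite !mulr_gt0.
rewrite -(ler_pM2l P_gt0); nra.
Qed.

Lemma flat_at_path s u : path (fun v w => 0 < b v w) u s -> last u s = z ->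
  y \notin u :: s -> x \notin s -> flat_at u.
Proof.
elim: s u => [|v s IH] u /=; first by move=> _ -> _ _; exact: flat_at_z.
case/andP=> buv vs sz; rewrite !inE !negb_or => /and3P[_ yv ys] /andP[xv xs].
apply: (flat_at_step (v := v)); rewrite 1?eq_sym // 1?graph_sym //.
by apply: IH; rewrite // inE negb_or yv.
Qed.

Lemma near_opt_exists eta : resist b x z = (A + B)%:E ->
  0 < eta -> eta <= A -> eta <= B -> exists f, near_opt eta f.
Proof.
move=> xzAB eta_gt0 etaA etaB.
have [f f2 gt] : exists2 f, energy2 f = 2%:E & A + B - eta < (f z - f x) ^+ 2.
  have : ((A + B - eta)%:E < resist b x z)%E by rewrite xzAB lte_fin; lra.
  by case/ereal_sup_gt => _ [f /energy_eq1 f2 <-]; rewrite lte_fin; exists f.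
wlog fxz : f f2 gt / f x <= f z => [oriented|].
  have [|fzx] := lerP (f x) (f z); first exact: oriented.
  apply: (oriented (fun u => - f u)); rewrite ?energy2_opp //; last lra.
  by rewrite (_ : - f z - - f x = - (f z - f x)) ?sqrrN //; ring.
have [fyx|fxy] := ltrP (f y) (f x).
  by have := diff_sq_le_resist f2 yzB; nra.
have [fzy|fyz] := ltrP (f z) (f y).
  by have := diff_sq_le_resist f2 xyA; nra.
by exists f; split.
Qed.

Lemma not_flat_at_x : resist b x z = (A + B)%:E -> ~ flat_at x.
Proof.
move=> xzAB flat_x; have A0 := A_gt0; have B0 := B_gt0.
have [tau [tau_gt0 tau_A]] : exists tau, 0 < tau /\ 4 * tau * (A + B + 2) = A.
  exists (A / (4 * (A + B + 2))); split.
    by rewrite divr_gt0 ?mulr_gt0 //; lra.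
  by field; rewrite gt_eqF //; lra.
have [eta0 eta0_gt0 flat0] := flat_x tau tau_gt0.
have [eta [eta_gt0 eta0_le etaA etaB]] :
    exists eta, [/\ 0 < eta, eta <= eta0, eta <= A / 4 & eta <= B].
  exists (Num.min eta0 (Num.min (A / 4) B)).
  by rewrite !lt_min eta0_gt0 divr_gt0 // B_gt0 !ge_min !lexx !orbT.
have [f opt] : exists f, near_opt eta f by apply: near_opt_exists => //; lra.
have := flat0 f (near_opt_mono eta0_le opt).
case: opt => f2 fxy fyz; rewrite (min_l fxy) => gt p_le.
have q_le := diff_sq_le_resist f2 yzB.
have tau_le1 : tau <= 1 by nra.
have tq : 2 * tau * (f z - f y) <= tau * (1 + B).
  by have := sqr_ge0 (f z - f y - 1); nra.
move: gt; apply/negP; rewrite -leNgt; nra.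
Qed.

End propagation.

Lemma resist_edge_le u v : 0 < b u v -> (resist b u v <= (2 / b u v)%:E)%E.
Proof.
move=> buv; apply: resist_le => f f2.
have := edge_energy_le_energy2 f (u, v); rewrite f2 lee_fin /edge_energy /=.
by rewrite ler_pdivlMr // -sqrrN opprB; lra.
Qed.

Lemma resist_path_bounded u s : path (fun v w => 0 < b v w) u s ->
  exists K, (resist b u (last u s) <= K%:E)%E.
Proof.
elim: s u => [|v s IH] u /=; first by exists 0; rewrite resist_xx.
case/andP=> buv /IH [K vK]; exists (2 / b u v + K).
by rewrite EFinD (le_trans (resist_triangle u v _)) // leeD // resist_edge_le.
Qed.

Lemma resist_add_separates x y z :
  resist b x z = (resist b x y + resist b y z)%E ->
  forall s, is_bpath b x z s -> y \in x :: s.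
Proof.
move=> xyz s /and3P[us xs /eqP sz]; apply/negPn/negP => ys.
have xy : x != y by apply: contraNneq ys => ->; rewrite mem_head.
have yz : y != z by apply: contraNneq ys => ->; rewrite -sz mem_last.
have [K xzK] := resist_path_bounded xs; rewrite sz xyz in xzK.
have [A xyA] := resist_bounded_real (le_trans (leeDl _ (resist_ge0 y z)) xzK).
have [B yzB] := resist_bounded_real (le_trans (leeDr _ (resist_ge0 x y)) xzK).
have xzAB : resist b x z = (A + B)%:E by rewrite xyz xyA yzB.
have A_gt0 := resist_gt0 xy xyA; have B_gt0 := resist_gt0 yz yzB.
apply: (not_flat_at_x xyA yzB A_gt0 B_gt0 xzAB).
by apply: (flat_at_path xyA yzB A_gt0 xs sz ys); case/andP: us.
Qed.

End graph.

Unset Implicit Arguments.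

Theorem proposition3p2 (R : realType) (X : countType) (b : X -> X -> R)
  (hb : is_graph b) (hnz : exists u v, b u v != 0) (x y z : X) :
  (resist b x z = resist b x y + resist b y z)%E <->
  (forall s : seq X, is_bpath b x z s -> y \in x :: s).
Proof.
split; first exact: resist_add_separates.
move=> sep; have [<-|xy] := eqVneq x y; first by rewrite resist_xx ?add0e.
exact: resist_separated sep.
Qed.
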